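(* Let $\Lambda$ be a Legendrian knot. (i) If $4|\operatorname{rot}(\Lambda)|+\operatorname{tb}(\Lambda)\ge0$, then $m(\Lambda)\ge\left\lceil\sqrt{4|\operatorname{rot}(\Lambda)|+\operatorname{tb}(\Lambda)}\right\rceil$. (ii) If $\operatorname{tb}(\Lambda)\le0$, then $m(\Lambda)\ge\left\lceil\sqrt{-\operatorname{tb}(\Lambda)}\right\rceil$. More precisely, if $\Lambda$ is depicted by a suitably connected Legendrian $n$-mosaic, then $n^2\ge4|\operatorname{rot}(\Lambda)|+\operatorname{tb}(\Lambda)$ and $n^2\ge-\operatorname{tb}(\Lambda)$.
   Context: Legendrian knots are taken in the standard contact structure on $\mathbb{R}^3$ and represented by front ($xz$-) projections, which have cusps in place of vertical tangencies and in which the strand of more negative slope is the overstrand at every crossing. For an oriented front with $P$ positive crossings, $N$ negative crossings, $C$ cusps, $D$ downward-oriented and $U$ upward-oriented cusps, $\operatorname{tb}=P-N-\frac12C$ and $\operatorname{rot}=\frac12(D-U)$. Legendrian mosaic tiles: a square tile whose four edge midpoints are potential connection points; the tiles are $T_0$ (empty); $T_1,\dots,T_4$ (a single arc joining midpoints of two adjacent edges, one per pair of adjacent edges); $T_5,T_6$ (a segment joining midpoints of opposite edges); $T_7,T_8$ (two disjoint arcs each joining adjacent edges, using all four midpoints); $T_{10}$ (two crossing segments joining opposite edges). A Legendrian $n$-mosaic is an $n\times n$ array of these tiles with the array rotated $45^\circ$ counterclockwise so the strands form a front diagram (after rotation $T_2$, $T_4$ contain one cusp and $T_8$ two cusps;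 $T_1,T_3,T_7$ contain none; in $T_{10}$ the negative-slope strand is over). It is suitably connected if connection points agree across shared edges and none lies on the outer boundary. The mosaic number $m(\Lambda)$ is the smallest $n$ such that some suitably connected Legendrian $n$-mosaic depicts a front of a Legendrian knot Legendrian isotopic to $\Lambda$. *)

From mathcomp Require Import all_boot all_order all_algebra.
Set Implicit Arguments. Unset Strict Implicit. Unset Printing Implicit Defensive.
Import Order.TTheory GRing.Theory Num.Theory.

(* After rotating the tile 45 degrees CCW: N -> upper-left edge,
   E -> upper-right edge, S -> lower-right edge, W -> lower-left edge. *)
Definition eN := 0%N.
Definition eE := 1%N.
Definition eS := 2%N.
Definition eW := 3%N.

Inductive tile := T0 | T1 | T2 | T3 | T4 | T5 | T6 | T7 | T8 | T10.

(* After rotation: {W,N} (T4) is a right cusp, {E,S} (T2) a left cusp,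
   {N,E} (T3) and {S,W} (T1) are cusp-free arcs; N-S (T5) has negative
   slope, E-W (T6) positive slope; T7 has the two cusp-free arcs, T8 the
   two cusped arcs; T10 is a crossing of N-S (negative slope, OVER) and
   E-W (positive slope, under). *)
Definition segs (t : tile) : seq (nat * nat) :=
  match t with
  | T0 => [::]
  | T1 => [:: (eS, eW)]
  | T2 => [:: (eE, eS)]
  | T3 => [:: (eN, eE)]
  | T4 => [:: (eW, eN)]
  | T5 => [:: (eN, eS)]
  | T6 => [:: (eE, eW)]
  | T7 => [:: (eN, eE); (eS, eW)]
  | T8 => [:: (eW, eN); (eE, eS)]
  | T10 => [:: (eN, eS); (eE, eW)]
  end.

Definition isT10 (t : tile) : bool := if t is T10 then true else false.

Definition hasEdge (t : tile) (e : nat) : bool :=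
  has (fun p : nat * nat => (p.1 == e) || (p.2 == e)) (segs t).

(* A Legendrian n-mosaic: row i (top to bottom), column j (left to right). *)
Definition mosaic (n : nat) := 'I_n -> 'I_n -> tile.

Definition tile_at n (M : mosaic n) (i j : nat) : tile :=
  match (insub i : option 'I_n), (insub j : option 'I_n) with
  | Some a, Some b => M a b
  | _, _ => T0
  end.

Definition suitably_connected n (M : mosaic n) : Prop :=
  (forall i j, i < n -> j < n ->
     hasEdge (tile_at M i j) eE = hasEdge (tile_at M i j.+1) eW /\
     hasEdge (tile_at M i j) eS = hasEdge (tile_at M i.+1 j) eN) /\
  (forall j, ~~ hasEdge (tile_at M 0 j) eN) /\
  (forall i, ~~ hasEdge (tile_at M i 0) eW).

(* A visit of an oriented strand segment: ((row, column), (entry edge, exit edge)). *)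
Definition visit := ((nat * nat) * (nat * nat))%type.

Definition step (p : nat * nat) (e : nat) : nat * nat :=
  if e == eN then (p.1.-1, p.2)
  else if e == eE then (p.1, p.2.+1)
  else if e == eS then (p.1.+1, p.2)
  else (p.1, p.2.-1).

Definition opp_edge (e : nat) : nat := (e + 2) %% 4.

Definition seg_ok n (M : mosaic n) (v : visit) : bool :=
  let t := tile_at M v.1.1 v.1.2 in
  ((v.2.1, v.2.2) \in segs t) || ((v.2.2, v.2.1) \in segs t).

Definition linked (v w : visit) : bool :=
  (w.1 == step v.1 v.2.2) && (w.2.1 == opp_edge v.2.2).

(* s is an oriented traversal of the whole front depicted by M as a single
   closed curve (so the mosaic depicts a knot, with an orientation):
   s is a nonempty cyclic sequence of consecutive oriented segments, and
   every segment of every tile is traversed exactly once. *)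
Definition knot_traversal n (M : mosaic n) (s : seq visit) : Prop :=
  [/\ s != [::], all (seg_ok M) s, cycle linked s &
      forall i j a b, i < n -> j < n -> (a, b) \in segs (tile_at M i j) ->
        count (fun v : visit => (v.1 == (i, j)) &&
                 ((v.2 == (a, b)) || (v.2 == (b, a)))) s = 1].

Definition cusps (s : seq visit) : nat :=
  count (fun v : visit => v.2 \in [:: (eW, eN); (eN, eW); (eE, eS); (eS, eE)]) s.
(* Downward-oriented cusps: from upper-left to lower-left edge (N -> W), or
   from upper-right to lower-right edge (E -> S). *)
Definition down_cusps (s : seq visit) : nat :=
  count (fun v : visit => v.2 \in [:: (eN, eW); (eE, eS)]) s.
Definition up_cusps (s : seq visit) : nat :=
  count (fun v : visit => v.2 \in [:: (eW, eN); (eS, eE)]) s.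

(* With the
   usual convention (positive iff det(over direction, under direction) > 0,
   rotation preserving orientation), the crossing is positive iff
   (over goes N->S and under goes W->E) or (over goes S->N and under E->W). *)
Definition pos_crossing (s : seq visit) (i j : nat) : bool :=
  (((i, j), (eN, eS)) \in s) == (((i, j), (eW, eE)) \in s).

Definition num_pos n (M : mosaic n) (s : seq visit) : nat :=
  \sum_(i < n) \sum_(j < n) (isT10 (M i j) && pos_crossing s i j).
Definition num_neg n (M : mosaic n) (s : seq visit) : nat :=
  \sum_(i < n) \sum_(j < n) (isT10 (M i j) && ~~ pos_crossing s i j).

Local Open Scope ring_scope.

Definition tbL n (M : mosaic n) (s : seq visit) : rat :=
  (num_pos M s)%:R - (num_neg M s)%:R - (cusps s)%:R / 2.
Definition rotL (s : seq visit) : rat :=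
  ((down_cusps s)%:R - (up_cusps s)%:R) / 2.

From mathcomp Require Import all_boot all_order all_algebra.
From mathcomp Require Import zify lra.
Import Order.TTheory GRing.Theory Num.Theory.
Set Implicit Arguments. Unset Strict Implicit. Unset Printing Implicit Defensive.

(* Give every tile of the mosaic its share of 2 tb and 4 rot: its cusps C, the
   sign P - N of its crossing, and a rotation weight R = (height change of the
   oriented strands through it) + 2 (down cusps - up cusps).  Heights of edge
   midpoints telescope along the closed front, so the R's add up to
   2 (D - U) = 4 rot, while the C's add up to C = D + U and the crossing signs
   to P - N.  A finite check over the ten tiles and their orientations gives
   C + |R| + 2 (P - N) <= 2 and C - 2 (P - N) <= 2 on each tile; summing over
   the n^2 tiles and using |D - U| <= D + U yields both bounds. *)

Local Open Scope ring_scope.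

Section SumsOverSequences.

Variable V : nmodType.

Lemma sum_cycle_shift (T : Type) (r : rel T) (P : pred T) (f g : T -> V) s :
  (forall x y, r x y -> P x -> g y = f x) -> cycle r s -> all P s ->
  \sum_(x <- s) f x = \sum_(x <- s) g x.
Proof.
move=> rfg; case: s => [|x p] /= x_path Ps; first by rewrite !big_nil.
have sum_path y q : path r y q -> all P (belast y q) ->
    \sum_(z <- belast y q) f z = \sum_(z <- q) g z.
  elim: q y => [|z q IHq] y /=; first by rewrite !big_nil.
  by case/andP=> ryz zq /andP[Py Pq]; rewrite !big_cons (IHq z) // (rfg y z).
have := sum_path x (rcons p x) x_path; rewrite belast_rcons => -> //.
by rewrite -cats1 big_cat big_seq1 big_cons addrC.
Qed.

Lemma sum_count_grouped (T U : eqType) (P : pred T) (g : T -> U)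
    (f : U -> V) (s : seq T) (S : seq U) :
  uniq S -> {in s, forall x, P x -> g x \in S} ->
  \sum_(x <- s | P x) f (g x) = \sum_(u <- S) f u *+ count (fun x => P x && (g x == u)) s.
Proof.
move=> uS; elim: s => [|x s IHs] sS.
  by rewrite big_nil big1 // => u _; rewrite mulr0n.
under [RHS]eq_bigr do rewrite /= mulrnDr.
rewrite big_cons big_split /= -IHs => [|y ys]; last by apply: sS; rewrite inE ys orbT.
case: ifP => Px; last by rewrite [X in _ = X + _]big1 ?add0r // => u _; rewrite andFb mulr0n.
congr (_ + _); have gxS : g x \in S by apply: sS; rewrite ?mem_head.
rewrite (bigD1_seq (g x)) //= eqxx mulr1n big1 ?addr0 // => u.
by rewrite eq_sym => /negbTE ->.
Qed.

Lemma sum_split_cells n (s : seq visit) (F : visit -> V) :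
  {in s, forall v, v.1.1 < n /\ v.1.2 < n}%N ->
  \sum_(v <- s) F v =
  \sum_(p : 'I_n * 'I_n) \sum_(v <- s | v.1 == (p.1 : nat, p.2 : nat)) F v.
Proof.
move=> s_grid; under [RHS]eq_bigr do rewrite big_mkcond.
rewrite exchange_big big_seq [RHS]big_seq; apply: eq_bigr => v /s_grid[vi vj].
by rewrite -big_mkcond (big_pred1 (Ordinal vi, Ordinal vj)).
Qed.

End SumsOverSequences.

Lemma count_sum_int (T : Type) (a : pred T) (s : seq T) :
  (count a s)%:Z = \sum_(x <- s) (a x)%:Z.
Proof.
by rewrite -sum1_count -natz natr_sum big_mkcond; apply: eq_bigr => x _; case: (a x).
Qed.

Definition rev_arc (p : nat * nat) : nat * nat := (p.2, p.1).

Definition oriented_arcs (t : tile) : seq (nat * nat) := segs t ++ map rev_arc (segs t).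

Definition down_arc (p : nat * nat) : bool := p \in [:: (eN, eW); (eE, eS)].
Definition up_arc (p : nat * nat) : bool := p \in [:: (eW, eN); (eS, eE)].
Definition cusp_arc (p : nat * nat) : bool :=
  p \in [:: (eW, eN); (eN, eW); (eE, eS); (eS, eE)].

(* After the rotation the N and E edges are the upper edges of a tile. *)
Definition edge_height (e : nat) : int := if e \in [:: eN; eE] then 1 else -1.
Definition height_change (p : nat * nat) : int := edge_height p.2 - edge_height p.1.
Definition rot_weight (p : nat * nat) : int :=
  height_change p + 2 * ((down_arc p)%:Z - (up_arc p)%:Z).

Lemma cusps_down_up (s : seq visit) : cusps s = (down_cusps s + up_cusps s)%N.
Proof.
rewrite -count_predUI (@eq_count _ (predI _ _) pred0) ?count_pred0 ?addn0.
  by apply: eq_count => -[? [[|[|[|[|?]]]] [|[|[|[|?]]]]]].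
by move=> [? [[|[|[|[|?]]]] [|[|[|[|?]]]]]].
Qed.

Definition orients (t : tile) (c : nat * nat -> nat) : Prop :=
  forall p, p \in segs t -> (c p + c (rev_arc p))%N = 1%N.

Definition tile_sum (t : tile) (c : nat * nat -> nat) (w : nat * nat -> int) : int :=
  \sum_(p <- oriented_arcs t) (c p)%:Z * w p.

Definition positive_in (t : tile) (c : nat * nat -> nat) : bool :=
  isT10 t && ((0 < c (eN, eS)) == (0 < c (eW, eE)))%N.
Definition negative_in (t : tile) (c : nat * nat -> nat) : bool :=
  isT10 t && ((0 < c (eN, eS)) != (0 < c (eW, eE)))%N.

(* Each triple (a, b, k) gives a valid inequality a C + b R + k (P - N) <= 2 on
   every oriented tile; the first two amount to C + |R| + 2 (P - N) <= 2. *)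
Definition tile_coeffs : seq (int * int * int) := [:: (1, 1, 2); (1, -1, 2); (1, 0, -2)].

Lemma tile_bound t c a b k : (a, b, k) \in tile_coeffs -> orients t c ->
  a * tile_sum t c (fun p => (cusp_arc p)%:Z) + b * tile_sum t c rot_weight
    + k * ((positive_in t c)%:Z - (negative_in t c)%:Z) <= 2.
Proof.
rewrite !inE => abk orient_c.
have {orient_c} : all (fun p => c p + c (rev_arc p) == 1)%N (segs t).
  by apply/allP => p /orient_c ->.
case: t; rewrite /= /tile_sum /positive_in /negative_in /oriented_arcs /=
  ?big_cons ?big_nil /rot_weight /height_change /edge_height /cusp_arc
  /down_arc /up_arc /rev_arc /= /eN /eE /eS /eW /= => orient_c;
repeat (case/andP: orient_c => /eqP ? orient_c);
by case/or3P: abk => /eqP[-> -> ->]; lia.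
Qed.

Lemma oriented_arcs_uniq t : uniq (oriented_arcs t).
Proof. by case: t. Qed.

Lemma segs_ends_neq t a b : (a, b) \in segs t -> a != b.
Proof. by case: t; rewrite /= ?inE => //; repeat case/orP; case/eqP => -> ->. Qed.

(* Up to a positive factor, the height after rotation of the midpoint of edge e
   of the tile in row ij.1 and column ij.2. *)
Definition edge_midpoint_height (ij : nat * nat) (e : nat) : int :=
  2 * (ij.2%:Z - ij.1%:Z) + edge_height e.

Section Mosaic.

Variables (n : nat) (M : mosaic n) (s : seq visit).
Hypotheses (M_connected : suitably_connected M) (s_traversal : knot_traversal M s).

Definition visits (p : 'I_n * 'I_n) (a : nat * nat) : nat :=
  count (fun v : visit => (v.1 == (p.1 : nat, p.2 : nat)) && (v.2 == a)) s.

Lemma tile_at_ord (i j : 'I_n) : tile_at M i j = M i j.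
Proof. by rewrite /tile_at !valK. Qed.

Lemma visit_arc v : v \in s -> v.2 \in oriented_arcs (tile_at M v.1.1 v.1.2).
Proof.
have [_ s_ok _ _] := s_traversal; case: v => ij [a b] /(allP s_ok).
rewrite /seg_ok mem_cat /= => /orP[-> // | ba_seg].
by apply/orP; right; apply/mapP; exists (b, a).
Qed.

Lemma visit_in_grid v : v \in s -> (v.1.1 < n)%N /\ (v.1.2 < n)%N.
Proof.
move/visit_arc; rewrite /tile_at.
by case: insubP => [i -> _|//]; case: insubP => [j -> _|].
Qed.

Lemma visits_orient (p : 'I_n * 'I_n) : orients (M p.1 p.2) (visits p).
Proof.
move=> [a b] ab_seg; have [_ _ _ s_once] := s_traversal.
rewrite -(s_once p.1 p.2 a b) ?ltn_ord ?tile_at_ord // -count_predUI.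
rewrite (@eq_count _ (predI _ _) pred0) ?count_pred0 ?addn0.
  by apply: eq_count => v /=; rewrite andb_orr.
move=> v /=; case: (v.2 =P (a, b)) => [-> | _]; last by rewrite andbF.
by rewrite xpair_eqE eq_sym (negbTE (segs_ends_neq ab_seg)) !andbF.
Qed.

Lemma sum_visits_cells (w : nat * nat -> int) :
  \sum_(v <- s) w v.2 = \sum_(p : 'I_n * 'I_n) tile_sum (M p.1 p.2) (visits p) w.
Proof.
rewrite (sum_split_cells _ visit_in_grid); apply: eq_bigr => p _.
rewrite (sum_count_grouped w (oriented_arcs_uniq (M p.1 p.2))).
  by apply: eq_bigr => a _; rewrite -mulr_natl natz.
by move=> v /visit_arc arc_v /eqP v_p; rewrite v_p /= tile_at_ord in arc_v.
Qed.

Lemma pos_crossing_visits (p : 'I_n * 'I_n) :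
  pos_crossing s p.1 p.2 = ((0 < visits p (eN, eS)) == (0 < visits p (eW, eE)))%N.
Proof.
rewrite /pos_crossing -!has_pred1 !has_count.
by congr (_ == _); congr (0 < _)%N; apply: eq_count => -[].
Qed.

Lemma crossing_balance :
  (num_pos M s)%:Z - (num_neg M s)%:Z =
  \sum_(p : 'I_n * 'I_n) ((positive_in (M p.1 p.2) (visits p))%:Z
                          - (negative_in (M p.1 p.2) (visits p))%:Z).
Proof.
rewrite /num_pos /num_neg !pair_big -!natz !natr_sum -sumrB; apply: eq_bigr => p _.
by rewrite /positive_in /negative_in pos_crossing_visits !natz.
Qed.

Lemma linked_height v w : linked v w -> seg_ok M v ->
  edge_midpoint_height w.1 w.2.1 = edge_midpoint_height v.1 v.2.2.
Proof.
(* The boundary conditions exclude leaving row 0 northwards or column 0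
   westwards, where [step] would truncate. *)
have [_ [no_north no_west]] := M_connected.
case: v w => [[i j] [a e]] [[i' j'] [a' e']] /andP[/= /eqP w_step /eqP ->] seg_v.
have exit_e : hasEdge (tile_at M i j) e.
  by apply/hasP; case/orP: seg_v => seg; [exists (a, e) | exists (e, a)]; rewrite //= eqxx ?orbT.
move: w_step; rewrite /edge_midpoint_height /step /opp_edge /edge_height /=.
case: e {seg_v} exit_e => [|[|[|[|e]]]] exit_e //=; last by case: (tile_at M i j) exit_e.
- by case: i exit_e => [exit_e | i _ [-> ->]]; [case/negP: (no_north j) | lia].
- by case=> -> ->; lia.
- by case=> -> ->; lia.
- by case: j exit_e => [exit_e | j _ [-> ->]]; [case/negP: (no_west i) | lia].
Qed.

Lemma height_change_sum : \sum_(v <- s) height_change v.2 = 0.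
Proof.
have [_ s_ok s_cycle _] := s_traversal.
have split_change v : height_change v.2 =
    edge_midpoint_height v.1 v.2.2 - edge_midpoint_height v.1 v.2.1.
  by rewrite /height_change /edge_midpoint_height; lia.
rewrite (eq_bigr _ (fun v _ => split_change v)) sumrB.
by rewrite (sum_cycle_shift linked_height s_cycle s_ok) subrr.
Qed.

Lemma rot_weight_sum :
  \sum_(v <- s) rot_weight v.2 = 2 * ((down_cusps s)%:Z - (up_cusps s)%:Z).
Proof.
by rewrite big_split /= height_change_sum add0r -mulr_sumr sumrB !count_sum_int.
Qed.

Lemma mosaic_bound a b k : (a, b, k) \in tile_coeffs ->
  a * (cusps s)%:Z + b * (2 * ((down_cusps s)%:Z - (up_cusps s)%:Z))
    + k * ((num_pos M s)%:Z - (num_neg M s)%:Z) <= 2 * (n ^ 2)%:Z.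
Proof.
move=> abk; rewrite -rot_weight_sum crossing_balance (count_sum_int (fun v => cusp_arc v.2)).
rewrite (sum_visits_cells (fun p => (cusp_arc p)%:Z)) sum_visits_cells.
rewrite !mulr_sumr -!big_split /=.
have -> : 2 * (n ^ 2)%:Z = \sum_(p : 'I_n * 'I_n) 2.
  by rewrite sumr_const card_prod card_ord; lia.
by apply: ler_sum => p _; apply: tile_bound abk (@visits_orient p).
Qed.

End Mosaic.

Theorem theorem2p5 (n : nat) (M : mosaic n) (s : seq visit) :
  suitably_connected M -> knot_traversal M s ->
  4 * `|rotL s| + tbL M s <= (n ^ 2)%:R /\ - tbL M s <= (n ^ 2)%:R.
Proof.
move=> M_connected s_traversal.
have bound := mosaic_bound M_connected s_traversal.
have := bound 1 1 2 isT; have := bound 1 (-1) 2 isT.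
have := bound 1 0 (-2) isT.
have /(congr1 (fun m => m%:R : rat)) := cusps_down_up s.
have natE (m : nat) : (m%:Z)%:~R = m%:R :> rat by [].
rewrite -!(ler_int rat) !(rmorphD, rmorphB, rmorphM, rmorphN) /= !mulr1z !mulr0z !natE.
rewrite /rotL /tbL normrM normfV (@ger0_norm _ 2) //.
have down_ge0 : 0 <= (down_cusps s)%:R :> rat := ler0n _ _.
have up_ge0 : 0 <= (up_cusps s)%:R :> rat := ler0n _ _.
have [DU_ge0 | DU_lt0] := lerP 0 ((down_cusps s)%:R - (up_cusps s)%:R : rat).
  by rewrite ger0_norm //; lra.
by rewrite ltr0_norm //; lra.
Qed.
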